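(* If $G$ is a non-abelian finite group, then $\mathrm{am}(\mathrm{ZL}^1(G))>1$.
   Context: $\mathrm{L}^1(G)$ is the convolution algebra of $G$ with normalised Haar measure $\int_G f=\frac1{|G|}\sum_{s\in G}f(s)$, and $\mathrm{ZL}^1(G)$ its centre. For a Banach algebra $\mathfrak{A}$, $\mathrm{am}(\mathfrak{A})$ is the infimum of $\sup_\alpha\|\mu_\alpha\|$ over bounded approximate diagonals, i.e. bounded nets $(\mu_\alpha)$ in $\mathfrak{A}\hat\otimes\mathfrak{A}$ with $m(\mu_\alpha)a\to a$, $a\,m(\mu_\alpha)\to a$, $a\cdot\mu_\alpha-\mu_\alpha\cdot a\to0$ for all $a$ ($m$ multiplication, $a\cdot(b\otimes c)=ab\otimes c$, $(b\otimes c)\cdot a=b\otimes ca$). *)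

From HB Require Import structures.
From mathcomp Require Import all_boot all_order all_algebra all_fingroup.
From mathcomp Require Import complex.
From mathcomp Require Import boolp classical_sets reals constructive_ereal ereal.
Set Implicit Arguments. Unset Strict Implicit. Unset Printing Implicit Defensive.
Import Order.TTheory GRing.Theory Num.Theory.
Local Open Scope ring_scope.
Local Open Scope classical_set_scope.

Section ZL1.
Variables (R : realType) (gT : finGroupType).
Local Notation C := R[i].

Definition cmod (z : C) : R := Num.sqrt (complex.Re z ^+ 2 + complex.Im z ^+ 2).

(* L^1(G): functions G -> C; normalised Haar measure int f = |G|^-1 sum_s f s *)
Definition l1norm (f : gT -> C) : R :=
  (#|gT|%:R)^-1 * \sum_(s : gT) cmod (f s).

Definition conv (f g : gT -> C) : gT -> C :=
  fun t => ((#|gT|%:R)^-1)%:C%C * \sum_(s : gT) f s * g (s^-1 * t)%g.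

Definition inZL1 (f : gT -> C) : Prop := forall g : gT -> C, conv f g = conv g f.

(* Elementary tensors and finite sums of them; ZL^1(G) (x) ZL^1(G) is realised
   (G finite, so everything is finite-dimensional and the projective tensor
   product is algebraic) inside the functions G x G -> C. *)
Definition tens (s : seq ((gT -> C) * (gT -> C))) : gT -> gT -> C :=
  fun x y => \sum_(p <- s) p.1 x * p.2 y.

Definition ZL1_rep (mu : gT -> gT -> C) (s : seq ((gT -> C) * (gT -> C))) : Prop :=
  (forall p, p \in s -> inZL1 p.1 /\ inZL1 p.2) /\ mu = tens s.

Definition inZL1tens (mu : gT -> gT -> C) : Prop := exists s, ZL1_rep mu s.

Definition projnorm (mu : gT -> gT -> C) : R :=
  inf [set x : R | exists s, ZL1_rep mu s /\
                   x = \sum_(p <- s) l1norm p.1 * l1norm p.2].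

(* multiplication map m(a (x) b) = a * b *)
Definition tmul (mu : gT -> gT -> C) : gT -> C :=
  fun u => ((#|gT|%:R)^-1)%:C%C * \sum_(s : gT) mu s (s^-1 * u)%g.

(* module actions a.(b (x) c) = ab (x) c,  (b (x) c).a = b (x) ca *)
Definition lact (a : gT -> C) (mu : gT -> gT -> C) : gT -> gT -> C :=
  fun x y => conv a (fun z => mu z y) x.
Definition ract (mu : gT -> gT -> C) (a : gT -> C) : gT -> gT -> C :=
  fun x y => conv (mu x) a y.

Definition tsub (mu nu : gT -> gT -> C) : gT -> gT -> C := fun x y => mu x y - nu x y.

Definition directed_set (I : Type) (le : I -> I -> Prop) : Prop :=
  [/\ inhabited I, (forall i, le i i), (forall i j k, le i j -> le j k -> le i k)
    & (forall i j, exists k, le i k /\ le j k)].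

Definition net_to0 (I : Type) (le : I -> I -> Prop) (r : I -> R) : Prop :=
  forall eps : R, 0 < eps -> exists i0, forall i, le i0 i -> r i < eps.

Definition bdd_approx_diag (I : Type) (le : I -> I -> Prop)
  (mu : I -> gT -> gT -> C) : Prop :=
  [/\ directed_set le,
      (forall i, inZL1tens (mu i)),
      (exists M : R, forall i, projnorm (mu i) <= M) &
   [/\
      (forall a, inZL1 a ->
         net_to0 le (fun i => l1norm (fun t => conv (tmul (mu i)) a t - a t))),
      (forall a, inZL1 a ->
         net_to0 le (fun i => l1norm (fun t => conv a (tmul (mu i)) t - a t)))
    & (forall a, inZL1 a ->
         net_to0 le (fun i => projnorm (tsub (lact a (mu i)) (ract (mu i) a))))]].

(* amenability constant am(ZL^1(G)) in the extended reals (+oo if no b.a.d.) *)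
Definition amZL1 : \bar R :=
  ereal_inf [set c : \bar R | exists (I : Type) (le : I -> I -> Prop)
                                  (mu : I -> gT -> gT -> C),
               bdd_approx_diag le mu /\
               c = ereal_sup [set (projnorm (mu i))%:E | i in [set: I]]].

End ZL1.

From Pilot Require Import Defs.
From mathcomp Require Import all_boot all_order all_algebra all_fingroup.
From mathcomp Require Import complex.
From mathcomp Require Import boolp classical_sets reals constructive_ereal ereal.
From mathcomp Require Import ring lra.
Set Implicit Arguments. Unset Strict Implicit. Unset Printing Implicit Defensive.
Import Order.TTheory GRing.Theory Num.Theory.
Local Open Scope complex_scope.
Local Open Scope ring_scope.

(* Fix a non-central g and let a be the normalised indicator of its conjugacy
   class. Any function of G x G acts as a kernel on tensors, and we test an
   approximate diagonal (mu_i) against the kernel K whose pairing is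
     <K, mu> = 6/5 m(mu)(1)/|G| + 1/5 <L, a.mu - mu.a>,
   with L(x, y) = 1 when x is central and x y is conjugate to g. Along the net
   <K, mu_i> tends to 6/5. On the other hand |K| <= 2/5 off the antidiagonal,
   |K| <= 8/5 on it and K(x, x^-1) = 1 for central x, while for non-central x
   a class function takes its value at x^-1 also at some other conjugate of
   x^-1. Hence each row of K has norm at most 1 against class functions, so
   |<K, mu>| is bounded by the projective norm of mu, and am(ZL^1(G)) >= 6/5. *)

Section ComplexModulus.
Variable R : realType.
Local Notation C := R[i].

Lemma cmodE (z : C) : (cmod z)%:C = `|z|.
Proof. by case: z. Qed.

Lemma cmod_ge0 (z : C) : 0 <= cmod z.
Proof. exact: sqrtr_ge0. Qed.

Lemma cmodR (r : R) : cmod r%:C = `|r|.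
Proof. by rewrite /cmod /= expr0n /= addr0 sqrtr_sqr. Qed.

Lemma cmod0 : cmod (0 : C) = 0.
Proof. by rewrite /cmod /= expr0n addr0 sqrtr0. Qed.

Lemma cmod1 : cmod (1 : C) = 1.
Proof. by rewrite /cmod /= expr1n expr0n addr0 sqrtr1. Qed.

Lemma cmodD (x y : C) : cmod (x + y) <= cmod x + cmod y.
Proof. by rewrite -lecR rmorphD /= !cmodE ler_normD. Qed.

Lemma cmodM (x y : C) : cmod (x * y) = cmod x * cmod y.
Proof. by apply: complexI; rewrite rmorphM /= !cmodE normrM. Qed.

Lemma cmodN (x : C) : cmod (- x) = cmod x.
Proof. by apply: complexI; rewrite !cmodE normrN. Qed.

Lemma cmod_sum (I : Type) (r : seq I) (P : pred I) (F : I -> C) :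
  cmod (\sum_(i <- r | P i) F i) <= \sum_(i <- r | P i) cmod (F i).
Proof.
rewrite -lecR cmodE rmorph_sum /=.
under [X in _ <= X]eq_bigr do rewrite cmodE.
exact: ler_norm_sum.
Qed.

End ComplexModulus.

Section KernelPairing.
Variables (R : realType) (gT : finGroupType).
Local Notation C := R[i].
Local Notation ZG := 'C([set: gT])%g.
Implicit Types (f a : gT -> C) (K L : gT -> gT -> C) (mu : gT -> gT -> C).
Implicit Types (ps : seq ((gT -> C) * (gT -> C))).

Definition nR : R := #|gT|%:R.

Definition ninv : C := (nR^-1)%:C.

Lemma nR_gt0 : 0 < nR.
Proof. by rewrite ltr0n; apply/card_gt0P; exists 1%g. Qed.

Lemma cmod_ninv : cmod ninv = nR^-1.
Proof. by rewrite cmodR ger0_norm // invr_ge0 ltW // nR_gt0. Qed.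

Lemma ninv_nR : ninv * nR%:C = 1.
Proof. by rewrite -rmorphM /= mulVf // gt_eqF // nR_gt0. Qed.

Lemma l1norm_ge_pt f v : nR^-1 * cmod (f v) <= l1norm f.
Proof.
rewrite /l1norm -/nR ler_pM2l ?invr_gt0 ?nR_gt0 //.
by rewrite (bigD1 v) //= lerDl sumr_ge0 // => j _; exact: cmod_ge0.
Qed.

Lemma sum_mul_pt (F : gT -> C) (v : gT) :
  \sum_s F s * (if s == v then 1 else 0) = F v.
Proof.
rewrite (bigD1 v) //= eqxx mulr1 big1 ?addr0 // => s /negPf ->; exact: mulr0.
Qed.

Definition class_fun f := forall x h, f (x ^ h)%g = f x.

(* Convolving with the point mass at h^-1 on either side and evaluating at
   h^-1 x gives f (x ^ h) and f x respectively. *)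
Lemma inZL1P f : inZL1 f <-> class_fun f.
Proof.
split=> [Zf x h | cf g]; last first.
  apply: funext => t; rewrite /conv; congr (_ * _).
  have inj : injective (fun r : gT => t * r^-1)%g by move=> a b /mulgI /invg_inj.
  rewrite (reindex_inj inj) /=; apply: eq_bigr => r _.
  rewrite mulrC invMg invgK -mulgA mulVg mulg1; congr (_ * _).
  by rewrite -(cf (t * r^-1)%g r) conjgE mulgA mulgA mulgKV.
pose pt := fun u : gT => if u == h^-1%g then 1 else 0 : C.
have := congr1 (fun F => F (h^-1 * x)%g) (Zf pt); rewrite /conv /=.
have pt_shift s : pt (s^-1 * (h^-1 * x))%g = if s == (h^-1 * x * h)%g then 1 else 0.
  rewrite /pt; set y := (h^-1 * x)%g; congr (if _ then _ else _).
  apply/eqP/eqP => e; first by rewrite -(mulKVg s y) e mulgKV.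
  by rewrite e invMg mulgKV.
under eq_bigr do rewrite pt_shift.
rewrite sum_mul_pt; under [X in _ = _ * X]eq_bigr do rewrite mulrC.
rewrite sum_mul_pt invgK mulKVg conjgE mulgA; apply: mulfI.
by apply/eqP => /complexI /eqP; rewrite invr_eq0 gt_eqF ?nR_gt0.
Qed.

Lemma class_fun_conv a (p : gT -> C) :
  class_fun a -> class_fun p -> class_fun (conv a p).
Proof.
move=> ca cp x h; rewrite /conv; congr (_ * _).
rewrite (reindex_inj (@conjg_inj _ h)) /=; apply: eq_bigr => r _.
by rewrite ca -conjVg -conjMg cp.
Qed.

Lemma inZL1_conv a (p : gT -> C) : inZL1 a -> inZL1 p -> inZL1 (conv a p).
Proof. by move=> /inZL1P ca /inZL1P cp; apply/inZL1P/class_fun_conv. Qed.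

Lemma inZL1_opp (p : gT -> C) : inZL1 p -> inZL1 (fun x => - p x).
Proof. by move=> /inZL1P cp; apply/inZL1P => x h; rewrite cp. Qed.

Lemma lact_tens a ps : lact a (tens ps) = tens [seq (conv a p.1, p.2) | p <- ps].
Proof.
apply: funext => x; apply: funext => y.
rewrite /lact /tens /conv big_map big_distrr /=.
under eq_bigr do rewrite !big_distrr /=.
rewrite exchange_big /=; apply: eq_bigr => p _.
rewrite -mulrA big_distrl big_distrr /=; apply: eq_bigr => t _.
by rewrite !mulrA.
Qed.

Lemma ract_tens a ps : Defs.ract (tens ps) a = tens [seq (p.1, conv p.2 a) | p <- ps].
Proof.
apply: funext => x; apply: funext => y.
rewrite /Defs.ract /tens /conv big_map big_distrr /=.
under eq_bigr do rewrite big_distrl big_distrr /=.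
rewrite exchange_big /=; apply: eq_bigr => p _.
rewrite mulrCA !big_distrr /=; apply: eq_bigr => t _.
by rewrite !mulrA.
Qed.

Lemma tsub_tens ps1 ps2 :
  tsub (tens ps1) (tens ps2) = tens (ps1 ++ [seq (fun x => - p.1 x, p.2) | p <- ps2]).
Proof.
apply: funext => x; apply: funext => y.
rewrite /tsub /tens big_cat big_map /= -sumrN; congr (_ + _).
by apply: eq_bigr => p _; rewrite mulNr.
Qed.

Local Notation tcomm a mu := (tsub (lact a mu) (Defs.ract mu a)).

Lemma inZL1tens_commutator a mu : inZL1 a -> inZL1tens mu -> inZL1tens (tcomm a mu).
Proof.
move=> Za [s [Zs ->]]; rewrite lact_tens ract_tens tsub_tens.
eexists; split; last by []; move=> p; rewrite mem_cat => /orP[] /mapP[q].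
  by move=> /Zs[Z1 Z2] ->; split=> //; exact: inZL1_conv.
by move=> /mapP[r /Zs[Z1 Z2] ->] ->; split; [exact: inZL1_opp | exact: inZL1_conv].
Qed.

Definition tpair K mu : C := ninv * ninv * \sum_x \sum_y mu x y * K x y.

Lemma tpair_tens K ps :
  tpair K (tens ps) = \sum_(p <- ps) tpair K (fun x y => p.1 x * p.2 y).
Proof.
rewrite /tpair /tens -big_distrr /=; congr (_ * _).
under eq_bigr do under eq_bigr do rewrite big_distrl /=.
by under eq_bigr do rewrite exchange_big /=; rewrite exchange_big.
Qed.

Lemma tpair_kernel_lin (c1 c2 : C) K1 K2 mu :
  tpair (fun x y => c1 * K1 x y + c2 * K2 x y) mu = c1 * tpair K1 mu + c2 * tpair K2 mu.
Proof.
rewrite /tpair !mulr_sumr -big_split /=; apply: eq_bigr => x _.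
by rewrite !mulr_sumr -big_split /=; apply: eq_bigr => y _; ring.
Qed.

Lemma tpair_kernelB K1 K2 mu :
  tpair (fun x y => K1 x y - K2 x y) mu = tpair K1 mu - tpair K2 mu.
Proof.
have := tpair_kernel_lin 1 (-1) K1 K2 mu; rewrite mul1r mulN1r => <-.
by congr tpair; apply: funext => x; apply: funext => y; rewrite mul1r mulN1r.
Qed.

Lemma tpair_tsub K mu nu : tpair K (tsub mu nu) = tpair K mu - tpair K nu.
Proof.
rewrite /tpair /tsub -mulrBr; congr (_ * _); rewrite -sumrB; apply: eq_bigr => x _.
by rewrite -sumrB; apply: eq_bigr => y _; ring.
Qed.

Definition antidiag (x y : gT) : C := if (x * y == 1)%g then 1 else 0.

Lemma tpair_antidiag mu : tpair antidiag mu = ninv * tmul mu 1%g.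
Proof.
rewrite /tpair /tmul -mulrA; congr (_ * _); congr (_ * _); apply: eq_bigr => x _.
rewrite /antidiag; have eq_inv y : (x * y == 1)%g = (y == x^-1)%g.
  by apply/eqP/eqP => [e|->]; [rewrite -(mulKg x y) e mulg1 | rewrite mulgV].
by under eq_bigr do rewrite eq_inv; rewrite sum_mul_pt mulg1.
Qed.

Definition lkernel a L x y : C := ninv * \sum_s a s * L (s * x)%g y.

Definition rkernel a L x y : C := ninv * \sum_w a (y^-1 * w)%g * L x w.

Lemma tpair_lact a L mu : tpair L (lact a mu) = tpair (lkernel a L) mu.
Proof.
rewrite /tpair /lact /lkernel /conv; congr (_ * _).
transitivity (\sum_s \sum_x \sum_y ninv * a s * mu x y * L (s * x)%g y); last first.
  rewrite exchange_big /=; apply: eq_bigr => x _.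
  rewrite exchange_big /=; apply: eq_bigr => y _.
  by rewrite !big_distrr /=; apply: eq_bigr => t _; ring.
transitivity (\sum_x \sum_y \sum_s ninv * a s * mu (s^-1 * x)%g y * L x y).
  apply: eq_bigr => x _; apply: eq_bigr => y _.
  by rewrite big_distrr big_distrl /=; apply: eq_bigr => t _; ring.
under eq_bigr do rewrite exchange_big /=.
rewrite exchange_big /=; apply: eq_bigr => t _.
rewrite (reindex_inj (mulgI t)) /=; apply: eq_bigr => x _.
by apply: eq_bigr => y _; rewrite mulKg.
Qed.

Lemma tpair_ract a L mu : tpair L (Defs.ract mu a) = tpair (rkernel a L) mu.
Proof.
rewrite /tpair /Defs.ract /rkernel /conv; congr (_ * _); apply: eq_bigr => x _.
transitivity (\sum_y \sum_t ninv * mu x t * a (t^-1 * y)%g * L x y).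
  apply: eq_bigr => y _; rewrite big_distrr big_distrl /=.
  by apply: eq_bigr => t _; ring.
rewrite exchange_big /=; apply: eq_bigr => t _.
by rewrite !big_distrr /=; apply: eq_bigr => y _; ring.
Qed.

Lemma cmod_avg_le a (b : gT -> C) : (forall s, cmod (b s) <= 1) ->
  cmod (ninv * \sum_s a s * b s) <= l1norm a.
Proof.
move=> b_le1; rewrite cmodM cmod_ninv /l1norm -/nR.
rewrite ler_pM2l ?invr_gt0 ?nR_gt0 //.
apply: le_trans (cmod_sum _ _ _) _; apply: ler_sum => s _.
by rewrite cmodM ler_piMr ?cmod_ge0.
Qed.

Lemma cmod_lkernel a L x y : (forall x y, cmod (L x y) <= 1) ->
  cmod (lkernel a L x y) <= l1norm a.
Proof. by move=> L_le1; apply: cmod_avg_le. Qed.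

Lemma cmod_rkernel a L x y : (forall x y, cmod (L x y) <= 1) ->
  cmod (rkernel a L x y) <= l1norm a.
Proof.
move=> L_le1; rewrite /rkernel (reindex_inj (mulgI y)) /=.
by under eq_bigr do rewrite mulKg; apply: cmod_avg_le.
Qed.

Definition row_bounded K :=
  forall q x, class_fun q -> cmod (\sum_y q y * K x y) <= \sum_y cmod (q y).

Lemma row_bounded_le1 L : (forall x y, cmod (L x y) <= 1) -> row_bounded L.
Proof.
move=> L_le1 q x _; apply: le_trans (cmod_sum _ _ _) _; apply: ler_sum => y _.
by rewrite cmodM ler_piMr ?cmod_ge0.
Qed.

Lemma cmod_tpair_tensor K (p q : gT -> C) : row_bounded K -> class_fun q ->
  cmod (tpair K (fun x y => p x * q y)) <= l1norm p * l1norm q.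
Proof.
move=> rowK cq; rewrite /tpair /l1norm.
have -> : \sum_x \sum_y p x * q y * K x y = \sum_x p x * \sum_y q y * K x y.
  by apply: eq_bigr => x _; rewrite big_distrr; apply: eq_bigr => y _; rewrite /= mulrA.
rewrite !cmodM cmod_ninv -/nR [X in _ <= X]mulrACA.
rewrite ler_pM2l ?mulr_gt0 ?invr_gt0 ?nR_gt0 // mulr_suml.
apply: le_trans (cmod_sum _ _ _) _; apply: ler_sum => x _.
by rewrite cmodM; apply: ler_wpM2l; [exact: cmod_ge0 | exact: rowK].
Qed.

Lemma cmod_tpair_le_projnorm K mu : row_bounded K -> inZL1tens mu ->
  cmod (tpair K mu) <= projnorm mu.
Proof.
move=> rowK [s0 rep0]; apply: lb_le_inf.
  by exists (\sum_(p <- s0) l1norm p.1 * l1norm p.2), s0.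
move=> r [s [[Zs ->] ->]]; rewrite tpair_tens big_seq_cond [X in _ <= X]big_seq_cond.
apply: le_trans (cmod_sum _ _ _) _; apply: ler_sum => p /andP[/Zs[_ /inZL1P cq] _].
exact: cmod_tpair_tensor.
Qed.

Definition unitL1 (v : gT) : C := if v == 1%g then nR%:C else 0.

Lemma inZL1_unit : inZL1 unitL1.
Proof. by apply/inZL1P => x h; rewrite /unitL1 conjg_eq1. Qed.

Lemma conv_unit f : conv f unitL1 = f.
Proof.
apply: funext => t; rewrite /conv (bigD1 t) //= big1 ?addr0 => [|s /negPf ne].
  by rewrite /unitL1 -eq_mulVg1 eqxx mulrCA ninv_nR mulr1.
by rewrite /unitL1 -eq_mulVg1 ne mulr0.
Qed.


Lemma noncentral_conj x : x \notin ZG -> exists h, (x ^ h)%g != x.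
Proof.
move=> xNZ; apply/existsP; apply: contraR xNZ => /existsPn fix_x.
by apply/centP => h _; apply/commgP/conjg_fixP/eqP/negbNE.
Qed.

Section NonCentralClass.
Variable g : gT.
Hypothesis g_noncentral : g \notin ZG.

Definition classg : {set gT} := (g ^: [set: gT])%g.

Lemma classg_conj x h : ((x ^ h)%g \in classg) = (x \in classg).
Proof. by rewrite (class_transl _ (memJ_class x _)) ?inE. Qed.

Lemma classg_noncentral s : s \in classg -> s \notin ZG.
Proof.
move=> sg; apply: contra g_noncentral => sZ.
by move: sg; rewrite class_sym (cent_classP _ _ sZ) inE => /eqP ->.
Qed.

Lemma classg_mul_central s x : s \in classg -> x \in ZG -> (s * x)%g \notin ZG.
Proof.
move=> sg xZ; apply: contra (classg_noncentral sg) => sxZ.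
by rewrite -(mulgK x s) groupM ?groupV.
Qed.

Definition kR : R := #|classg|%:R.

Lemma kR_gt0 : 0 < kR.
Proof. by rewrite ltr0n; apply/card_gt0P; exists g; exact: class_refl. Qed.

Definition classg_dens (t : gT) : C := if t \in classg then (nR / kR)%:C else 0.

Lemma cmod_classg_dens t : cmod (classg_dens t) = if t \in classg then nR / kR else 0.
Proof.
rewrite /classg_dens; case: ifP => _; last exact: cmod0.
by rewrite cmodR ger0_norm // divr_ge0 // ltW ?nR_gt0 ?kR_gt0.
Qed.

Lemma sum_cmod_classg_dens : \sum_t cmod (classg_dens t) = nR.
Proof.
under eq_bigr do rewrite cmod_classg_dens.
by rewrite -big_mkcond /= sumr_const -mulr_natr -/kR mulfVK // gt_eqF ?kR_gt0.
Qed.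

Lemma sum_classg_dens : \sum_t classg_dens t = nR%:C.
Proof.
rewrite -sum_cmod_classg_dens rmorph_sum /=; apply: eq_bigr => t _.
by rewrite cmod_classg_dens /classg_dens; case: ifP.
Qed.

Lemma l1norm_classg_dens : l1norm classg_dens = 1.
Proof. by rewrite /l1norm sum_cmod_classg_dens mulVf // gt_eqF ?nR_gt0. Qed.

Lemma inZL1_classg_dens : inZL1 classg_dens.
Proof. by apply/inZL1P => x h; rewrite /classg_dens classg_conj. Qed.

Definition Lg (x y : gT) : C := if (x \in ZG) && ((x * y)%g \in classg) then 1 else 0.

Lemma cmod_Lg x y : cmod (Lg x y) <= 1.
Proof. by rewrite /Lg; case: ifP; rewrite ?cmod1 ?cmod0. Qed.

Lemma lkernel_central x y : x \in ZG -> lkernel classg_dens Lg x y = 0.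
Proof.
move=> xZ; rewrite /lkernel big1 ?mulr0 // => s _.
rewrite /classg_dens; case: ifP => sg; last exact: mul0r.
by rewrite /Lg (negPf (classg_mul_central sg xZ)) mulr0.
Qed.

Lemma rkernel_central x : x \in ZG -> rkernel classg_dens Lg x x^-1 = 1.
Proof.
move=> xZ; rewrite /rkernel invgK.
transitivity (ninv * \sum_w classg_dens (x * w)%g).
  congr (_ * _); apply: eq_bigr => w _; rewrite /Lg xZ /classg_dens.
  by case: ifP => _; rewrite ?mulr1 ?mulr0.
rewrite (reindex_inj (mulgI x^-1%g)) /=.
by under eq_bigr do rewrite mulKVg; rewrite sum_classg_dens ninv_nR.
Qed.

(* K (x, x^-1) = 1 on the centre forces c1 - c2 = 1; the row bound then needs
   3 c2 <= 1 - 2 c2, so c2 = 1/5 is optimal and yields am >= c1 = 6/5. *)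
Definition c1 : C := (6 / 5 : R)%:C.
Definition c2 : C := (1 / 5 : R)%:C.

Definition Lg_comm (x y : gT) : C :=
  lkernel classg_dens Lg x y - rkernel classg_dens Lg x y.

Definition Kg (x y : gT) : C := c1 * antidiag x y + c2 * Lg_comm x y.

Lemma cmod_c1 : cmod c1 = 6 / 5.
Proof. by rewrite cmodR ger0_norm. Qed.

Lemma cmod_c2 : cmod c2 = 1 / 5.
Proof. by rewrite cmodR ger0_norm. Qed.

Lemma cmod_Lg_comm x y : cmod (Lg_comm x y) <= 2.
Proof.
rewrite /Lg_comm; apply: le_trans (cmodD _ _) _; rewrite cmodN.
have := cmod_lkernel classg_dens x y cmod_Lg.
have := cmod_rkernel classg_dens x y cmod_Lg.
rewrite l1norm_classg_dens; lra.
Qed.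

Lemma cmod_Kg_off x y : y != x^-1%g -> cmod (Kg x y) <= 2 / 5.
Proof.
move=> ne; rewrite /Kg /antidiag.
have -> : (x * y == 1)%g = false.
  by apply/negP => /eqP e; case/negP: ne; rewrite -(mulKg x y) e mulg1.
rewrite mulr0 add0r cmodM cmod_c2.
have := cmod_Lg_comm x y; lra.
Qed.

Lemma cmod_Kg_antidiag x : cmod (Kg x x^-1) <= 8 / 5.
Proof.
rewrite /Kg /antidiag mulgV eqxx mulr1.
apply: le_trans (cmodD _ _) _; rewrite cmodM cmod_c1 cmod_c2.
have := cmod_Lg_comm x x^-1; lra.
Qed.

Lemma Kg_central x : x \in ZG -> Kg x x^-1 = 1.
Proof.
move=> xZ; rewrite /Kg /Lg_comm /antidiag mulgV eqxx.
rewrite lkernel_central // rkernel_central //.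
rewrite /c1 /c2 mulr1 sub0r mulrN1 -rmorphN -rmorphD /=.
by rewrite [X in X%:C](_ : _ = 1) //; field.
Qed.

(* For non-central x the value of a class function at x^-1 is repeated at a
   conjugate y != x^-1, which pays for the excess 3/5 of |K (x, x^-1)|. *)
Lemma row_bounded_Kg : row_bounded Kg.
Proof.
move=> q x cq.
rewrite (bigD1 x^-1%g) //= [X in _ <= X](bigD1 x^-1%g) //=.
set A := cmod (q x^-1%g); set B := \sum_(y | y != x^-1%g) cmod (q y).
have A_ge0 : 0 <= A by exact: cmod_ge0.
have B_ge0 : 0 <= B by apply: sumr_ge0 => y _; exact: cmod_ge0.
have off_le : cmod (\sum_(y | y != x^-1%g) q y * Kg x y) <= 2 / 5 * B.
  apply: le_trans (cmod_sum _ _ _) _; rewrite /B mulr_sumr; apply: ler_sum => y ne.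
  rewrite cmodM mulrC.
  by apply: ler_wpM2r; [exact: cmod_ge0 | exact: cmod_Kg_off].
apply: le_trans (cmodD _ _) _; rewrite cmodM -/A.
have [xZ | xNZ] := boolP (x \in ZG).
  by rewrite Kg_central // cmod1 mulr1; lra.
have [h ne] : exists h, (x^-1 ^ h)%g != x^-1%g.
  by apply: noncentral_conj; rewrite groupV.
have A_le_B : A <= B.
  rewrite /A -(cq _ h) /B (bigD1 (x^-1 ^ h)%g) //= lerDl.
  by apply: sumr_ge0 => y _; exact: cmod_ge0.
have := cmod_Kg_antidiag x; have := cmod_ge0 (Kg x x^-1); nra.
Qed.

Lemma tpair_Kg mu :
  tpair Kg mu = c1 * (ninv * tmul mu 1%g) + c2 * tpair Lg (tcomm classg_dens mu).
Proof.
rewrite /Kg /Lg_comm tpair_kernel_lin tpair_antidiag tpair_kernelB.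
by rewrite tpair_tsub tpair_lact tpair_ract.
Qed.

Lemma projnorm_ge_Kg mu : inZL1tens mu ->
  6 / 5 <= projnorm mu + 6 / 5 * cmod (ninv * tmul mu 1%g - 1)
           + 1 / 5 * cmod (tpair Lg (tcomm classg_dens mu)).
Proof.
move=> Zmu; set A := ninv * tmul mu 1%g; set B := tpair Lg _.
have Kg_le : cmod (tpair Kg mu) <= projnorm mu.
  exact: cmod_tpair_le_projnorm row_bounded_Kg Zmu.
have c1E : c1 = tpair Kg mu - c1 * (A - 1) - c2 * B by rewrite tpair_Kg -/A -/B; ring.
rewrite -cmod_c1 -cmod_c2 {1}c1E -!cmodM.
apply: le_trans (cmodD _ _) _; rewrite cmodN lerD2r.
by apply: le_trans (cmodD _ _) _; rewrite cmodN lerD2r.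
Qed.

Lemma approx_diag_projnorm_ge (I : Type) (le : I -> I -> Prop)
    (mu : I -> gT -> gT -> C) :
  bdd_approx_diag le mu -> forall e : R, 0 < e ->
  exists i, 6 / 5 <= projnorm (mu i) + 2 * e.
Proof.
move=> [[_ _ _ directed] Zmu _ [unit_approx _ comm_approx]] e e_gt0.
have [i1 i1_unit] := unit_approx _ inZL1_unit e e_gt0.
have [i2 i2_comm] := comm_approx _ inZL1_classg_dens e e_gt0.
have [i [i1i i2i]] := directed i1 i2; exists i.
have unit_le : cmod (ninv * tmul (mu i) 1%g - 1) <= e.
  have := i1_unit i i1i; rewrite conv_unit => /ltW; apply: le_trans.
  apply: le_trans (l1norm_ge_pt _ 1%g).
  by rewrite /= /unitL1 eqxx -cmod_ninv -cmodM mulrBr ninv_nR.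
have comm_le : cmod (tpair Lg (tcomm classg_dens (mu i))) <= e.
  apply: le_trans (ltW (i2_comm i i2i)).
  apply: cmod_tpair_le_projnorm; first exact: row_bounded_le1 cmod_Lg.
  exact: inZL1tens_commutator inZL1_classg_dens (Zmu i).
have := projnorm_ge_Kg (Zmu i); lra.
Qed.

End NonCentralClass.
End KernelPairing.

Theorem corollary1p9 (R : realType) (gT : finGroupType) :
  ~~ abelian [set: gT] -> (1%:E < @amZL1 R gT)%E.
Proof.
move=> /subsetPn[g _ g_noncentral].
apply: (@lt_le_trans _ _ (6 / 5 : R)%:E); first by rewrite lte_fin; lra.
apply: le_ereal_inf_tmp => _ [I [le [mu [diag_mu ->]]]].
apply/lee_subgt0Pr => e e_gt0.
have e2_gt0 : 0 < e / 2 by rewrite divr_gt0.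
have [i i_ge] := approx_diag_projnorm_ge g_noncentral diag_mu e2_gt0.
apply: le_ereal_sup_tmp; exists (projnorm (mu i))%:E; first by exists i.
by rewrite -EFinB lee_fin; lra.
Qed.
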